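(* Let $(\sigma_i)_{i\in\mathbb{N}}$ be i.i.d. copies of $\sigma_0$, where $L(u):=1/\mathbf{P}(\sigma_0>u)$ is slowly varying. For $x>0$ let $i_x:=\min\{i:\sigma_i>x\}$ and $i_x^-:=\mathrm{argmax}\{\sigma_i:i<i_x\}$. Then, as $x\to\infty$, each of the four families \[ \frac{i_x}{L(x)},\qquad \frac{L(\sigma_{i_x})}{L(x)}-1,\qquad \frac{L(\sigma_{i_x^-})}{L(x)},\qquad 1-\frac{L(\sigma_{i_x^-})}{L(x)} \] is bounded above and bounded below in probability.
   Context: $\sigma_0$ is a strictly positive random variable under $\mathbf{P}$ and $L(u):=1/\mathbf{P}(\sigma_0>u)$ satisfies $\lim_{u\to\infty}L(uv)/L(u)=1$ for all $v>0$. A family $(Y_x)$ of non-negative random variables is bounded above in probability if $(Y_x)$ is tight (for large $x$), and bounded below in probability if $(1/Y_x)$ is tight. *)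

From HB Require Import structures.
From mathcomp Require Import all_boot all_order all_algebra.
From mathcomp Require Import all_classical all_reals all_analysis.
Set Implicit Arguments. Unset Strict Implicit. Unset Printing Implicit Defensive.
Import Order.TTheory GRing.Theory Num.Theory.
Import numFieldNormedType.Exports.
Local Open Scope classical_set_scope.
Local Open Scope ring_scope.

Section Defs.
Context {d : measure_display} {T : measurableType d} {R : realType}.

Definition iid_seq (P : probability T R) (X : nat -> T -> R) : Prop :=
  [/\ (forall i, measurable_fun setT (X i)),
      (forall i (B : set R), measurable B ->
          P (X i @^-1` B) = P (X 0%N @^-1` B)) &
      (forall (s : seq nat) (B : nat -> set R), uniq s ->
          (forall i, measurable (B i)) ->
          P (\bigcap_(i in [set j | j \in s]) (X i @^-1` B i)) =
          (\prod_(i <- s) P (X i @^-1` B i))%E)].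

Definition tailL (P : probability T R) (X0 : T -> R) (u : R) : R :=
  1 / fine (P [set t | u < X0 t]).

Definition slowly_varying (L : R -> R) : Prop :=
  forall v : R, 0 < v -> (fun u => L (u * v) / L u) x @[x --> +oo] --> (1:R).

(* i_x := min { i : X_i > x }  (0 if no such i, a null event) *)
Definition first_exceed (X : nat -> T -> R) (x : R) (t : T) : nat :=
  match pselect (exists i, x < X i t) with
  | left h => ex_minn (P := fun i => x < X i t) h
  | right _ => 0%N
  end.

(* i_x^- := an argmax of { X_i : i < i_x }  (0 if i_x = 0) *)
Definition argmax_before (X : nat -> T -> R) (x : R) (t : T) : nat :=
  xget 0%N [set j | (j < first_exceed X x t)%N /\
                    forall i, (i < first_exceed X x t)%N -> X i t <= X j t].

Definition bdd_above_in_prob (P : probability T R) (Y : R -> T -> R) : Prop :=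
  forall eps : R, 0 < eps -> exists M : R, exists x0 : R, forall x, x0 <= x ->
    (P [set t | (M < Y x t)%R] <= eps%:E)%E.

(* (Y_x) bounded below in probability: (1/Y_x) tight for large x,
   i.e. P(Y_x < 1/M) small, where Y_x = 0 counts as 1/Y_x = +oo *)
Definition bdd_below_in_prob (P : probability T R) (Y : R -> T -> R) : Prop :=
  forall eps : R, 0 < eps -> exists M : R, 0 < M /\ exists x0 : R,
    forall x, x0 <= x -> (P [set t | (Y x t < M^-1)%R] <= eps%:E)%E.

Definition bdd_in_prob (P : probability T R) (Y : R -> T -> R) : Prop :=
  bdd_above_in_prob P Y /\ bdd_below_in_prob P Y.

End Defs.

From HB Require Import structures.
From mathcomp Require Import all_boot all_order all_algebra.
From mathcomp Require Import all_classical all_reals all_analysis.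
From mathcomp Require Import ring lra.
Import Order.TTheory GRing.Theory Num.Theory.
Import numFieldNormedType.Exports.
Local Open Scope classical_set_scope.
Local Open Scope ring_scope.
Set Implicit Arguments. Unset Strict Implicit. Unset Printing Implicit Defensive.

(* Write p(x) := P(sigma_0 > x) = 1 / L(x).  The index i_x is geometric with
   success probability p(x): P(i_x >= K) = (1 - p(x))^K <= 1 / (1 + K p(x)) and
   P(i_x < K) <= K p(x), so i_x p(x) = i_x / L(x) is tight from both sides.  For
   the other three families take K of order 1 / p(x): outside the event
   {i_x >= K}, the relevant value sigma_{i_x} or max_{i < i_x} sigma_i forces one
   of sigma_0, ..., sigma_{K-1} into a set C, at a cost of at most K P(sigma_0 in C).
   Slow variation of L gives p(u/2) <= p(u) / r for u large and any r < 1; at a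
   point y of an up-closed set D with y/2 outside D this traps P(sigma_0 in D)
   between p(y) and p(y) / r, and that bounds the law of every set C needed. *)

Lemma expr_onem_le_inv (R : realFieldType) (a : R) n : 0 <= a <= 1 ->
  (1 - a) ^+ n <= (1 + n%:R * a)^-1.
Proof.
move=> /andP[a_ge0 a_le1]; have pos : 0 < 1 + n%:R * a by rewrite ltr_pwDl ?mulr_ge0.
rewrite -div1r ler_pdivlMr //; elim: n {pos} => [|n IH].
  by rewrite expr0 mul0r addr0 mulr1.
have step : (1 - a) * (1 + n.+1%:R * a) = 1 + n%:R * a - a ^+ 2 * n.+1%:R.
  by rewrite -natr1; ring.
rewrite exprSr -mulrA step; apply: le_trans IH; rewrite ler_wpM2l ?exprn_ge0 ?subr_ge0 //.
by rewrite gerBl mulr_ge0 ?sqr_ge0.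
Qed.

Lemma truncn_mul_bounds (R : archiFieldType) (s p : R) : 0 < p -> 0 <= s ->
  (Num.truncn (s / p))%:R * p <= s < (Num.truncn (s / p)).+1%:R * p.
Proof.
move=> p_gt0 s_ge0; rewrite -ler_pdivlMr // -ltr_pdivrMr // truncnS_gt andbT.
by rewrite truncn_le divr_ge0 // ltW.
Qed.

Lemma inv1D_le (R : realFieldType) (e k : R) : 0 < e -> e^-1 <= k -> (1 + k)^-1 <= e.
Proof.
move=> e_gt0 le_k; have k_gt0 : 0 < k by apply: lt_le_trans le_k; rewrite invr_gt0.
by rewrite invf_ple ?posrE //; [lra | rewrite ltr_pwDr].
Qed.

Section MeasureBounds.
Context d (T : measurableType d) (R : realType) (mu : {measure set T -> \bar R}).

Lemma measure_exists_lt_le K (G : nat -> set T) c :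
  (forall i, measurable (G i)) -> (forall i, (i < K)%N -> (mu (G i) <= c%:E)%E) ->
  (mu [set t | exists2 i, (i < K)%N & G i t] <= (K%:R * c)%:E)%E.
Proof.
move=> mG G_le; have cover : [set t | exists2 i, (i < K)%N & G i t] `<=`
    \big[setU/set0]_(i < K) G i by rewrite -bigcup_mkord => t [i] ? ?; exists i.
have := @content_subadditive _ _ _ mu _ G K (fun k _ => mG k) _ cover.
move=> /(_ (bigcup_measurable (fun i _ => mG i))) /le_trans; apply => //.
have -> : (K%:R * c)%:E = \sum_(k < K) c%:E.
  by rewrite sumEFin sumr_const card_ord mulr_natl.
by apply: lee_sum => i _; apply: G_le.
Qed.

Lemma le_measure_null (E A N : set T) : measurable E -> measurable A -> measurable N ->
  mu N = 0%E -> E `<=` A `|` N -> (mu E <= mu A)%E.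
Proof.
move=> mE mA mN N0 EAN; rewrite -(measureU0 mA mN N0).
by apply: le_measure; rewrite ?inE //; apply: measurableU.
Qed.
End MeasureBounds.

Section RealHalfLines.
Context (R : realType).
Implicit Types y : R.

Lemma measurable_gtr y : measurable [set z : R | y < z].
Proof. by have := measurable_itv `]y, +oo[; rewrite set_itvoy. Qed.

Lemma measurable_ger y : measurable [set z : R | y <= z].
Proof. by have := measurable_itv `[y, +oo[; rewrite set_itvcy. Qed.

Lemma measurable_ltr y : measurable [set z : R | z < y].
Proof. by have := measurable_itv `]-oo, y[; rewrite set_itvNyo. Qed.

Lemma measurable_ler y : measurable [set z : R | z <= y].
Proof. by have := measurable_itv `]-oo, y]; rewrite set_itvNyc. Qed.

Lemma measurable_gtr_fun d (T : measurableType d) (f : T -> R) y :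
  measurable_fun setT f -> measurable [set t | y < f t].
Proof.
by move=> mf; rewrite -[X in measurable X]setTI; exact: mf measurableT _ (measurable_gtr y).
Qed.

Lemma measurable_ltr_fun d (T : measurableType d) (f : T -> R) y :
  measurable_fun setT f -> measurable [set t | f t < y].
Proof.
by move=> mf; rewrite -[X in measurable X]setTI; exact: mf measurableT _ (measurable_ltr y).
Qed.

End RealHalfLines.

Section FirstExceedance.
Context d (T : measurableType d) (R : realType) (X : nat -> T -> R).
Implicit Types (x : R) (t : T) (i n : nat).

Definition never_exceeds x := [set t | forall i, X i t <= x].

Lemma first_exceed_lt x t i : (i < first_exceed X x t)%N -> X i t <= x.
Proof.
rewrite /first_exceed; case: pselect => [h|_] //.
case: ex_minnP => m _ m_min lt_im; rewrite leNgt; apply/negP => /m_min.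
by rewrite leqNgt lt_im.
Qed.

Lemma first_exceed_gt x t : ~ never_exceeds x t -> x < X (first_exceed X x t) t.
Proof.
move=> never; rewrite /first_exceed; case: pselect => [h|no_exceed]; first by case: ex_minnP.
by exfalso; apply: never => i; rewrite leNgt; apply/negP => ?; apply: no_exceed; exists i.
Qed.

Lemma first_exceed_never x t : never_exceeds x t -> first_exceed X x t = 0%N.
Proof.
move=> never; rewrite /first_exceed; case: pselect => // h; exfalso.
by case: h => i; rewrite ltNge never.
Qed.

Lemma first_exceed_eq x t n : (forall i, (i < n)%N -> X i t <= x) -> x < X n t ->
  first_exceed X x t = n.
Proof.
move=> below exceed; rewrite /first_exceed; case: pselect => [h|]; last by case; exists n.
case: ex_minnP => m exceed_m m_min; apply/eqP; rewrite eqn_leq m_min //=.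
by rewrite leqNgt; apply/negP => /below; rewrite leNgt exceed_m.
Qed.

Fixpoint running_max k t : R :=
  if k is k'.+1 then Num.max (running_max k' t) (X k t) else X 0%N t.

Lemma running_max_ub k t i : (i <= k)%N -> X i t <= running_max k t.
Proof.
elim: k => [|k IH] /=; first by rewrite leqn0 => /eqP ->.
rewrite leq_eqVlt ltnS => /orP[/eqP ->|/IH]; first by rewrite le_max lexx orbT.
by rewrite le_max => ->.
Qed.

Lemma running_max_le k t y : (forall i, (i <= k)%N -> X i t <= y) -> running_max k t <= y.
Proof.
elim: k => [|k IH] ub /=; first exact: ub.
by rewrite ge_max ub // andbT IH // => i /leqW; apply: ub.
Qed.

Lemma running_max_attained k t : exists2 j, (j <= k)%N & running_max k t = X j t.
Proof.
elim: k => [|k [j le_jk IH]] /=; first by exists 0%N.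
have [le_max_X|lt_X_max] := leP (running_max k t) (X k.+1 t).
  by exists k.+1; rewrite ?max_r.
by exists j; rewrite ?leqW // -IH max_l ?ltW.
Qed.

Lemma argmax_beforeP x t : (0 < first_exceed X x t)%N ->
  (argmax_before X x t < first_exceed X x t)%N /\
  forall i, (i < first_exceed X x t)%N -> X i t <= X (argmax_before X x t) t.
Proof.
move=> pos; have [j le_j max_j] := running_max_attained (first_exceed X x t).-1 t.
have witness : exists j, (j < first_exceed X x t)%N /\
    forall i, (i < first_exceed X x t)%N -> X i t <= X j t.
  exists j; split; first by rewrite (leq_ltn_trans le_j) // prednK.
  by move=> i lt_i; rewrite -max_j running_max_ub // -ltnS prednK.
by have := xgetPex 0%N witness; rewrite -/(argmax_before X x t).
Qed.

Lemma argmax_before0 x t : first_exceed X x t = 0%N -> argmax_before X x t = 0%N.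
Proof. by move=> h; rewrite /argmax_before h; apply: xgetPN => j []. Qed.

Lemma argmax_before_le x t : (0 < first_exceed X x t)%N -> X (argmax_before X x t) t <= x.
Proof. by move=> /argmax_beforeP[/first_exceed_lt]. Qed.

Lemma argmax_before_running_max x t :
  X (argmax_before X x t) t = running_max (first_exceed X x t).-1 t.
Proof.
case: (posnP (first_exceed X x t)) => [/[dup] /argmax_before0 -> -> //|pos].
have [lt_arg arg_max] := argmax_beforeP pos.
have le_pred i : (i < first_exceed X x t)%N = (i <= (first_exceed X x t).-1)%N.
  by case: (first_exceed X x t) pos.
apply/eqP; rewrite eq_le running_max_ub -?le_pred //=.
by apply: running_max_le => i; rewrite -le_pred => /arg_max.
Qed.

End FirstExceedance.

Section IidFirstExceedance.
Context d (T : measurableType d) (R : realType) (P : probability T R)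
  (sigma : nat -> T -> R).
Hypotheses (iid : iid_seq P sigma)
  (survival_pos : forall u : R, (0 < P [set t | (u < sigma 0%N t)%R])%E).
Local Notation L := (tailL P (sigma 0%N)).
Implicit Types (A B : set R) (i n : nat) (x y z : R).

(** * Law of [sigma 0] and the tail function *)

Lemma measurable_sigma i : measurable_fun setT (sigma i).
Proof. by case: iid. Qed.

Lemma measurable_sigma_preimage i B : measurable B -> measurable (sigma i @^-1` B).
Proof. by move=> mB; rewrite -[_ @^-1` _]setTI; apply: measurable_sigma. Qed.

Definition law B : R := fine (P (sigma 0%N @^-1` B)).

Lemma P_sigma_preimage i B : measurable B -> P (sigma i @^-1` B) = (law B)%:E.
Proof.
move=> mB; have [_ same_law _] := iid; rewrite same_law // fineK //.
rewrite ge0_fin_numE ?measure_ge0 // (le_lt_trans (probability_le1 _ _)) ?ltey //.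
exact: measurable_sigma_preimage.
Qed.

Lemma law_ge0 B : 0 <= law B.
Proof. by rewrite fine_ge0 // measure_ge0. Qed.

Lemma law_le1 B : measurable B -> law B <= 1.
Proof.
move=> mB; rewrite -lee_fin -(P_sigma_preimage 0 mB).
exact/probability_le1/measurable_sigma_preimage.
Qed.

Lemma le_law A B : measurable A -> measurable B -> A `<=` B -> law A <= law B.
Proof.
move=> mA mB AB; rewrite -lee_fin -(P_sigma_preimage 0 mA) -(P_sigma_preimage 0 mB).
by apply: le_measure; rewrite ?inE; [exact: measurable_sigma_preimage..|move=> t /AB].
Qed.

Lemma lawC B : measurable B -> law (~` B) = 1 - law B.
Proof.
move=> mB; apply/EFin_inj; rewrite -(P_sigma_preimage 0 (measurableC mB)).
by rewrite preimage_setC probability_setC ?P_sigma_preimage //; exact: measurable_sigma_preimage.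
Qed.

Lemma lawU A B : measurable A -> measurable B -> A `&` B = set0 ->
  law (A `|` B) = law A + law B.
Proof.
move=> mA mB AB0; apply/EFin_inj; rewrite EFinD -!(P_sigma_preimage 0) ?measurableU //.
rewrite preimage_setU measureU //; try exact: measurable_sigma_preimage.
  by rewrite -preimage_setI AB0 preimage_set0.
exact: measurableU.
Qed.

Definition all_in n A : set T := [set t | forall i, (i < n)%N -> A (sigma i t)].

Lemma measurable_all_in n A : measurable A -> measurable (all_in n A).
Proof.
by move=> mA; apply: (bigcap_measurableType (P := [set i | (i < n)%N])) => i _;
  apply: measurable_sigma_preimage.
Qed.

Lemma P_all_in n A : measurable A -> P (all_in n A) = (law A ^+ n)%:E.
Proof.
move=> mA; have [_ _ indep] := iid.
have := indep (iota 0 n) (fun=> A) (iota_uniq 0 n) (fun=> mA).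
have -> : \bigcap_(i in [set j | j \in iota 0 n]) (sigma i @^-1` A) = all_in n A.
  by apply/seteqP; split => t all_A i lt_i; apply: all_A; move: lt_i; rewrite /= mem_iota.
move=> ->; rewrite (eq_bigr (fun=> (law A)%:E)) => [|i _]; last exact: P_sigma_preimage.
have -> : iota 0 n = index_iota 0 n by rewrite /index_iota subn0.
by rewrite prodEFin prodr_const_nat subn0.
Qed.

Definition some_in n A : set T := [set t | exists2 i, (i < n)%N & A (sigma i t)].

Lemma measurable_some_in n A : measurable A -> measurable (some_in n A).
Proof. by move=> mA; apply: bigcup_measurable => i _; apply: measurable_sigma_preimage. Qed.

Lemma P_some_in_le n A : measurable A -> (P (some_in n A) <= (n%:R * law A)%:E)%E.
Proof.
move=> mA; apply: (measure_exists_lt_le (G := fun i => sigma i @^-1` A)) => [i|i _].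
  exact: measurable_sigma_preimage.
by rewrite -(P_sigma_preimage i mA).
Qed.

Definition survival y := law [set z | y < z].

Lemma survival_gt0 y : 0 < survival y.
Proof.
by rewrite -lte_fin -(P_sigma_preimage 0 (measurable_gtr y)); apply: survival_pos.
Qed.

Lemma survival_le1 y : survival y <= 1.
Proof. exact: (law_le1 (measurable_gtr y)). Qed.

Lemma le_survival y z : y <= z -> survival z <= survival y.
Proof.
move=> le_yz; apply: le_law => //; try exact: measurable_gtr.
by move=> w /=; apply: le_lt_trans.
Qed.

Lemma law_ler y : law [set z | z <= y] = 1 - survival y.
Proof.
rewrite -lawC //; last exact: measurable_gtr.
by congr law; apply/seteqP; split => z /=; rewrite leNgt => /negP.
Qed.

Lemma tailLE y : L y = (survival y)^-1.
Proof. by rewrite /tailL div1r. Qed.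

Lemma tailL_gt0 y : 0 < L y.
Proof. by rewrite tailLE invr_gt0 survival_gt0. Qed.

Local Hint Resolve survival_gt0 tailL_gt0 : core.

Lemma le_tailL y z : y <= z -> L y <= L z.
Proof. by move=> /le_survival; rewrite !tailLE lef_pV2 ?posrE ?survival_gt0. Qed.

Lemma tailL_ltW y z : L y < L z -> y < z.
Proof. by move=> lt_L; rewrite ltNge; apply: contraTN lt_L => /le_tailL; rewrite leNgt. Qed.

Lemma measurable_tailL : measurable_fun setT L.
Proof. exact: measurable_realfun.nondecreasing_measurable le_tailL. Qed.

Lemma lt_tailL_scale a y z : (L y < a * L z) = (survival z < a * survival y).
Proof.
have [sy0 sz0] := (survival_gt0 y, survival_gt0 z).
rewrite !tailLE -(ltr_pM2r (mulr_gt0 sy0 sz0)) mulKf ?gt_eqF //.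
by rewrite [survival y * _]mulrC mulrA mulfVK ?gt_eqF.
Qed.

Lemma le_tailL_scale a y z : (L y <= a * L z) = (survival z <= a * survival y).
Proof.
have [sy0 sz0] := (survival_gt0 y, survival_gt0 z).
rewrite !tailLE -(ler_pM2r (mulr_gt0 sy0 sz0)) mulKf ?gt_eqF //.
by rewrite [survival y * _]mulrC mulrA mulfVK ?gt_eqF.
Qed.

Lemma gt_tailL_scale a y z : (a * L z < L y) = (a * survival y < survival z).
Proof. by rewrite ltNge le_tailL_scale -ltNge. Qed.

Lemma ge_tailL_scale a y z : (a * L z <= L y) = (a * survival y <= survival z).
Proof. by rewrite leNgt lt_tailL_scale -leNgt. Qed.

Lemma measurable_tailL_preimage B : measurable B -> measurable (L @^-1` B).
Proof. by move=> mB; rewrite -[_ @^-1` _]setTI; apply: measurable_tailL. Qed.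

Lemma P_all_ler x n :
  (P (all_in n [set z | (z <= x)%R]) <= ((1 + n%:R * survival x)^-1)%:E)%E.
Proof.
rewrite P_all_in //; last exact: measurable_ler.
rewrite lee_fin law_ler expr_onem_le_inv // survival_le1 andbT.
exact/ltW/survival_gt0.
Qed.

Lemma measurable_never_exceeds x : measurable (never_exceeds sigma x).
Proof.
have -> : never_exceeds sigma x = \bigcap_i (sigma i @^-1` [set z | z <= x]).
  by apply/seteqP; split => t /= never i; [move=> _|]; apply: never.
by apply: bigcapT_measurable => i; apply: measurable_sigma_preimage; exact: measurable_ler.
Qed.

Lemma P_never_exceeds x : P (never_exceeds sigma x) = 0%E.
Proof.
apply/eqP; rewrite eq_le measure_ge0 andbT; apply/lee_addgt0Pr => e e_gt0.
rewrite add0e; have sx_gt0 := survival_gt0 x.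
pose n := (Num.truncn (e^-1 / survival x)).+1.
have never_all : never_exceeds sigma x `<=` all_in n [set z | z <= x].
  by move=> t never i _; apply: never.
apply: le_trans (le_measure _ _ _ never_all) _; rewrite ?inE.
- exact: measurable_never_exceeds.
- exact: (measurable_all_in n (measurable_ler x)).
apply: le_trans (P_all_ler x n) _; rewrite lee_fin.
have big : e^-1 < n%:R * survival x by rewrite -ltr_pdivrMr // truncnS_gt.
have pos : 0 < 1 + n%:R * survival x by rewrite ltr_pwDl ?mulr_ge0 ?ltW.
by rewrite invf_ple ?posrE //; lra.
Qed.

Lemma survival_small e : 0 < e -> exists y0, forall y, y0 <= y -> survival y <= e.
Proof.
move=> e_gt0; pose F n := sigma 0%N @^-1` [set z | n%:R < z].
have mF n : measurable (F n) by apply: measurable_sigma_preimage; exact: measurable_gtr.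
have capF : \bigcap_n F n = set0.
  apply/seteqP; split => t // inF.
  have /lt_le_trans/(_ (ler_norm _)) := inF (Num.truncn `|sigma 0%N t|).+1 I.
  by rewrite ltNge => /negP; apply; rewrite ltW // truncnS_gt.
have : P \o F @ \oo --> 0%E.
  rewrite -(measure0 P) -capF; apply: nonincreasing_cvg_mu => //.
  - by rewrite (le_lt_trans (probability_le1 P (mF 0%N))) // ltey.
  - by rewrite capF.
  - by move=> m n le_mn; apply/subsetPset => t /=; apply: le_lt_trans; rewrite ler_nat.
move/fine_cvgP => [_ /(cvgr_lt 0)/(_ e e_gt0)[N _ small]].
exists N%:R => y le_Ny; apply: le_trans (le_survival le_Ny) _.
by have := small N (leqnn N); rewrite /= /F (P_sigma_preimage 0 (measurable_gtr _)) => /ltW.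
Qed.

Lemma nat_mul_survival_between x s : 0 <= s ->
  exists K : nat, s < K%:R * survival x <= s + survival x.
Proof.
move=> s_ge0; have /andP[K_small K_big] := truncn_mul_bounds (survival_gt0 x) s_ge0.
by exists (Num.truncn (s / survival x)).+1; rewrite K_big -natr1 mulrDl mul1r lerD2r.
Qed.

(** * Measurability of the exceedance functionals *)

Lemma measurable_first_exceed_eq x n : measurable [set t | first_exceed sigma x t = n].
Proof.
have -> : [set t | first_exceed sigma x t = n] =
    (all_in n [set z | z <= x] `&` sigma n @^-1` [set z | x < z]) `|`
    (if n == 0%N then never_exceeds sigma x else set0).
  apply/seteqP; split => t /=.
    move=> <-; have [never|never] := pselect (never_exceeds sigma x t).
      by right; rewrite first_exceed_never.
    by left; split; [move=> i /first_exceed_lt | exact: first_exceed_gt].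
  case=> [[below exceed]|]; first exact: first_exceed_eq.
  by case: eqP => // -> /first_exceed_never.
apply: measurableU; last by case: eqP => _; [exact: measurable_never_exceeds|].
exact: measurableI (measurable_all_in _ (measurable_ler x))
  (measurable_sigma_preimage _ (measurable_gtr x)).
Qed.

Lemma measurable_fun_first_exceed x (g : nat -> T -> R) :
  (forall n, measurable_fun setT (g n)) ->
  measurable_fun setT (fun t => g (first_exceed sigma x t) t).
Proof.
move=> mg _ B mB; rewrite setTI.
have -> : (fun t => g (first_exceed sigma x t) t) @^-1` B =
    \bigcup_n ([set t | first_exceed sigma x t = n] `&` g n @^-1` B).
  by apply/seteqP; split => [t Bt|t [n _ [/= <- //]]]; exists (first_exceed sigma x t).
apply: bigcupT_measurable => n; apply: measurableI; first exact: measurable_first_exceed_eq.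
by rewrite -[_ @^-1` _]setTI; apply: mg.
Qed.

Lemma measurable_fun_running_max k : measurable_fun setT (running_max sigma k).
Proof.
elim: k => [|k IH] /=; first exact: measurable_sigma.
exact: measurable_realfun.measurable_maxr IH (measurable_sigma k.+1).
Qed.

Lemma measurable_fun_tailL_first_exceed x :
  measurable_fun setT (fun t => L (sigma (first_exceed sigma x t) t)).
Proof.
apply: (@measurable_fun_first_exceed x (fun n t => L (sigma n t))) => n.
exact: measurableT_comp measurable_tailL (measurable_sigma n).
Qed.

Lemma measurable_fun_tailL_argmax_before x :
  measurable_fun setT (fun t => L (sigma (argmax_before sigma x t) t)).
Proof.
under eq_fun do rewrite argmax_before_running_max.
apply: (@measurable_fun_first_exceed x (fun n t => L (running_max sigma n.-1 t))) => n.
exact: measurableT_comp measurable_tailL (measurable_fun_running_max _).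
Qed.

Lemma P_le_cover x (E A B : set T) : measurable E -> measurable A -> measurable B ->
  E `<=` (A `|` B) `|` never_exceeds sigma x -> (P E <= P A + P B)%E.
Proof.
move=> mE mA mB cover.
have union_bound : (P (A `|` B) <= P A + P B)%E by apply: measureU2.
apply: le_trans union_bound.
apply: (le_measure_null mE (measurableU _ _ mA mB) (measurable_never_exceeds x) _ cover).
exact: P_never_exceeds.
Qed.

Lemma P_first_exceed_in x K (C : set R) (E : set T) : measurable C -> measurable E ->
  (forall t, E t -> ~ never_exceeds sigma x t -> C (sigma (first_exceed sigma x t) t)) ->
  (P E <= ((1 + K%:R * survival x)^-1 + K%:R * law C)%:E)%E.
Proof.
move=> mC mE E_C; rewrite EFinD.
have cover : E `<=` (all_in K [set z | z <= x] `|` some_in K C) `|`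
    never_exceeds sigma x.
  move=> t Et; have [never|never] := pselect (never_exceeds sigma x t); [by right|left].
  have [le_K|lt_K] := leqP K (first_exceed sigma x t).
    by left => i lt_iK; apply: first_exceed_lt; apply: leq_trans le_K.
  by right; exists (first_exceed sigma x t) => //; apply: E_C.
apply: le_trans (P_le_cover mE _ _ cover) _.
- exact: measurable_all_in (measurable_ler x).
- exact: measurable_some_in.
exact: leeD (P_all_ler x K) (P_some_in_le K mC).
Qed.

(** * Consequences of slow variation *)

Lemma law_upclosed_sandwich u0 r (D : set R) : 0 < u0 ->
  (forall u, u0 <= u -> r * survival (u / 2) <= survival u) ->
  measurable D -> (forall y z, D y -> y <= z -> D z) -> D `<=` [set y | u0 < y] ->
  D !=set0 ->
  exists y, [/\ D y, ~ D (y / 2), survival y <= law D, law D <= survival (y / 2)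
              & r * survival (y / 2) <= survival y].
Proof.
move=> u0_gt0 ratio mD up_D D_gt [y0 Dy0].
have lb_D : lbound D u0 by move=> y /D_gt /ltW.
(* A point of D below 2 inf D has its half outside D. *)
have inf_gt0 : 0 < inf D by apply: lt_le_trans u0_gt0 (lb_le_inf _ lb_D); exists y0.
have [y Dy lt_y] := @inf_adherent _ D (inf D) inf_gt0
  (conj (ex_intro _ y0 Dy0) (ex_intro _ u0 lb_D)).
have notD : ~ D (y / 2) by move=> /(ge_inf (ex_intro _ u0 lb_D)); lra.
exists y; split => //.
- apply: le_law => //; first exact: measurable_gtr.
  by move=> z /= /ltW; apply: up_D.
- apply: le_law => //; first exact: measurable_gtr.
  move=> z Dz /=; rewrite ltNge; apply/negP => le_z; exact: notD (up_D _ _ Dz le_z).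
- exact/ratio/ltW/D_gt.
Qed.

Hypothesis slow : slowly_varying L.

Lemma survival_half r : r < 1 ->
  exists2 u0, 0 < u0 & forall u, u0 <= u -> r * survival (u / 2) <= survival u.
Proof.
move=> r_lt1; have half_gt0 : 0 < (2 : R)^-1 by rewrite invr_gt0.
have := cvgr_ge 1 (slow half_gt0) r r_lt1.
case=> M [_ near_oo]; exists (Num.max 1 (M + 1)); first by rewrite lt_max ltr01.
move=> u; rewrite ge_max => /andP[_ le_u].
have := near_oo u (lt_le_trans (ltr_pwDr ltr01 (lexx M)) le_u).
have [s2 su] := (survival_gt0 (u / 2), survival_gt0 u).
by rewrite !tailLE invrK mulrC ler_pdivlMr.
Qed.

Lemma law_tailL_gt : exists u0, forall x c, u0 <= x -> 1 <= c ->
  law [set y | c * L x < L y] <= 2 * survival x / c.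
Proof.
have [u0 u0_gt0 ratio] := survival_half (r := 1 / 2) ltac:(lra).
exists u0 => x c le_u0x c_ge1; pose D := [set y | c * L x < L y].
have mD : measurable D := measurable_tailL_preimage (measurable_gtr _).
have up_D y z : D y -> y <= z -> D z by move=> Dy /le_tailL; apply: lt_le_trans.
have D_gt : D `<=` [set y | u0 < y].
  move=> y Dy /=; apply: le_lt_trans le_u0x _; apply: tailL_ltW.
  by apply: le_lt_trans Dy; rewrite ler_peMl // (ltW (tailL_gt0 x)).
have D0 : D !=set0.
  have [y1 small] := survival_small (e := survival x / (2 * c))
    ltac:(by rewrite divr_gt0 // mulr_gt0 //; lra).
  exists y1; rewrite /D /= gt_tailL_scale.
  have := small y1 (lexx _); rewrite ler_pdivlMr; last lra.
  have := survival_gt0 x; nra.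
have [y [Dy _ _ le_lawD ratio_y]] := law_upclosed_sandwich u0_gt0 ratio mD up_D D_gt D0.
move: Dy; rewrite /D /= gt_tailL_scale => lt_y.
rewrite ler_pdivlMr; last lra.
have := law_ge0 D; nra.
Qed.

Lemma law_tailL_near_above g : 0 < g < 1 -> exists u0, forall x, u0 <= x ->
  law [set y | x < y /\ L y < (1 + g) * L x] <= 2 * g * survival x.
Proof.
move=> /andP[g_gt0 g_lt1].
have [u0 u0_gt0 ratio] := survival_half (r := 1 - g) ltac:(lra).
exists u0 => x le_u0x; have [sx_gt0 Lx_gt0] := (survival_gt0 x, tailL_gt0 x).
pose C := [set y | x < y /\ L y < (1 + g) * L x].
pose D := [set y | (1 + g) * L x <= L y].
have mC : measurable C :=
  measurableI _ _ (measurable_gtr x) (measurable_tailL_preimage (measurable_ltr _)).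
have mD : measurable D := measurable_tailL_preimage (measurable_ger _).
have D_gt y : D y -> x < y.
  move=> Dy; apply: tailL_ltW; apply: lt_le_trans Dy; rewrite ltr_pMl //; lra.
have law_CD : law C + law D = survival x.
  rewrite -lawU //; last first.
    by apply/seteqP; split => y // [[_ lt_y] Dy]; move: lt_y; rewrite ltNge Dy.
  congr law; apply/seteqP; split => y /=; first by case=> [[]|/D_gt].
  by move=> lt_xy; case: (ltP (L y) ((1 + g) * L x)) => ?; [left | right].
have up_D y z : D y -> y <= z -> D z by move=> Dy /le_tailL; apply: le_trans.
have D0 : D !=set0.
  have [y1 small] := survival_small (e := survival x / (1 + g)) ltac:(by rewrite divr_gt0 //; lra).
  by exists y1; rewrite /D /= ge_tailL_scale mulrC -ler_pdivlMr ?small //; lra.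
have D_u0 : D `<=` [set y | u0 < y] by move=> y /D_gt /=; apply: le_lt_trans.
have [y [_ notD le_y _ ratio_y]] := law_upclosed_sandwich u0_gt0 ratio mD up_D D_u0 D0.
move: notD; rewrite /D /= ge_tailL_scale => /negP; rewrite -ltNge => lt_half.
have := law_ge0 C; have := survival_gt0 (y / 2); nra.
Qed.

Lemma law_tailL_ge M : 0 < M -> exists x0, forall x, x0 <= x ->
  M * survival x <= 2 * law [set y | L x <= M * L y].
Proof.
move=> M_gt0; have [u0 u0_gt0 ratio] := survival_half (r := 1 / 2) ltac:(lra).
have su0_gt0 := survival_gt0 u0.
have [x0 small] := survival_small (e := survival u0 / (2 * M))
  ltac:(by rewrite divr_gt0 ?mulr_gt0).
exists x0 => x le_x0x; have sx_gt0 := survival_gt0 x.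
have sx_small : 2 * M * survival x <= survival u0.
  by move: (small x le_x0x); rewrite ler_pdivlMr ?mulr_gt0 // mulrC.
pose D := [set y | L x <= M * L y].
have mD : measurable D.
  have -> : D = L @^-1` [set z | M^-1 * L x <= z].
    by apply/seteqP; split => y; rewrite /= ler_pdivrMl.
  exact: measurable_tailL_preimage (measurable_ger _).
have up_D y z : D y -> y <= z -> D z.
  by move=> Dy /le_tailL le_L; apply: le_trans Dy _; rewrite ler_pM2l.
have D0 : D !=set0.
  have [y1 small1] := survival_small (e := M * survival x) ltac:(by rewrite mulr_gt0).
  by exists y1; rewrite /D /= le_tailL_scale small1.
have D_u0 : D `<=` [set y | u0 < y].
  move=> y Dy /=; rewrite ltNge; apply/negP => /le_tailL le_L.
  have := le_trans Dy (ler_wpM2l (ltW M_gt0) le_L); rewrite le_tailL_scale; nra.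
have [y [_ notD le_y _ ratio_y]] := law_upclosed_sandwich u0_gt0 ratio mD up_D D_u0 D0.
move: notD; rewrite /D /= le_tailL_scale => /negP; rewrite -ltNge => lt_half.
nra.
Qed.

Lemma law_tailL_near_below g : 0 < g <= 1 / 4 -> exists x0, forall x, x0 <= x ->
  law [set y | y <= x /\ (1 - g) * L x < L y] <= 4 * g * survival x.
Proof.
move=> /andP[g_gt0 g_small].
have [u0 u0_gt0 ratio] := survival_half (r := 1 - g) ltac:(lra).
have su0_gt0 := survival_gt0 u0.
have [x0 small] := survival_small (e := (1 - g) * survival u0 / 2)
  ltac:(by rewrite divr_gt0 ?mulr_gt0 //; lra).
exists x0 => x le_x0x; have [sx_gt0 Lx_gt0] := (survival_gt0 x, tailL_gt0 x).
have sx_small := small x le_x0x.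
pose C := [set y | y <= x /\ (1 - g) * L x < L y].
pose D := [set y | (1 - g) * L x < L y].
have mC : measurable C :=
  measurableI _ _ (measurable_ler x) (measurable_tailL_preimage (measurable_gtr _)).
have mD : measurable D := measurable_tailL_preimage (measurable_gtr _).
have Dx : D x by rewrite /D /=; nra.
have up_D y z : D y -> y <= z -> D z by move=> Dy /le_tailL; apply: lt_le_trans.
have law_CD : law C + survival x = law D.
  rewrite /survival -lawU //; last 2 first.
  - exact: measurable_gtr.
  - by apply/seteqP; split => y // [[le_y _] /=]; rewrite ltNge le_y.
  congr law; apply/seteqP; split => y /=; first by case=> [[]|/ltW]; last exact: up_D Dx.
  by move=> Dy; case: (leP y x) => ?; [left | right].
have D_u0 : D `<=` [set y | u0 < y].
  move=> y Dy /=; rewrite ltNge; apply/negP => /le_tailL /(lt_le_trans Dy).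
  rewrite gt_tailL_scale; nra.
have [y [Dy _ _ le_y ratio_y]] :=
  law_upclosed_sandwich u0_gt0 ratio mD up_D D_u0 (ex_intro _ x Dx).
move: Dy; rewrite /D /= gt_tailL_scale => lt_y.
have := law_ge0 C; have := survival_gt0 (y / 2); nra.
Qed.

(** * Tightness of the four families *)

Lemma bdd_below_in_prob_le1 (Y : R -> T -> R) :
  (forall eps : R, 0 < eps -> eps <= 1 -> exists M : R, 0 < M /\ exists x0 : R,
    forall x, x0 <= x -> (P [set t | (Y x t < M^-1)%R] <= eps%:E)%E) ->
  bdd_below_in_prob P Y.
Proof.
move=> small eps eps_gt0.
have [M [M_gt0 [x0 bound]]] := small (Num.min eps 1) ltac:(by rewrite lt_min eps_gt0 ltr01)
  ltac:(by rewrite ge_min lexx orbT).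
exists M; split => //; exists x0 => x /bound /le_trans; apply.
by rewrite lee_fin ge_min lexx.
Qed.

Lemma bdd_above_first_exceed :
  bdd_above_in_prob P (fun x t => (first_exceed sigma x t)%:R / L x).
Proof.
move=> eps eps_gt0; exists eps^-1, 0 => x _; have sx_gt0 := survival_gt0 x.
have epsV_ge0 : 0 <= eps^-1 by rewrite invr_ge0 ltW.
have [K /andP[K_big K_small]] := nat_mul_survival_between x epsV_ge0.
have cover : [set t | eps^-1 < (first_exceed sigma x t)%:R / L x] `<=`
    all_in K [set z | z <= x].
  move=> t /=; rewrite tailLE invrK => big i lt_iK.
  apply: first_exceed_lt; apply: leq_trans lt_iK _.
  rewrite -ltnS -(ltr_nat R) -(ltr_pM2r sx_gt0) -natr1 mulrDl mul1r; lra.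
apply: le_trans (le_measure _ _ _ cover) _; rewrite ?inE.
- apply: measurable_gtr_fun.
  exact: (@measurable_fun_first_exceed x (fun n _ => n%:R / L x)) => n; exact: measurable_cst.
- exact: measurable_all_in (measurable_ler x).
by apply: le_trans (P_all_ler x K) _; rewrite lee_fin inv1D_le // ltW.
Qed.

Lemma bdd_below_first_exceed :
  bdd_below_in_prob P (fun x t => (first_exceed sigma x t)%:R / L x).
Proof.
move=> eps eps_gt0; have eps2_gt0 : 0 < eps / 2 by rewrite divr_gt0.
have [y0 small] := survival_small eps2_gt0.
exists (2 / eps); split; first by rewrite divr_gt0.
exists y0 => x le_y0x; have [sx_gt0 sx_small] := (survival_gt0 x, small x le_y0x).
have [K /andP[K_big K_small]] := nat_mul_survival_between x (ltW eps2_gt0).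
have cover : [set t | (first_exceed sigma x t)%:R / L x < (2 / eps)^-1] `<=`
    some_in K [set z | x < z] `|` never_exceeds sigma x.
  move=> t /=; rewrite tailLE invrK invf_div => small_t.
  have [never|never] := pselect (never_exceeds sigma x t); [by right|left].
  exists (first_exceed sigma x t); last exact: first_exceed_gt.
  by rewrite -(ltr_nat R) -(ltr_pM2r sx_gt0); lra.
apply: le_trans (le_measure_null _ _ _ (P_never_exceeds x) cover) _.
- apply: measurable_ltr_fun.
  exact: (@measurable_fun_first_exceed x (fun n _ => n%:R / L x)) => n; exact: measurable_cst.
- exact: measurable_some_in (measurable_gtr x).
- exact: measurable_never_exceeds.
apply: le_trans (P_some_in_le K (measurable_gtr x)) _.
by rewrite -/(survival x) lee_fin; lra.
Qed.

Lemma bdd_above_tailL_first_exceed :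
  bdd_above_in_prob P (fun x t => L (sigma (first_exceed sigma x t) t) / L x - 1).
Proof.
move=> eps eps_gt0; have [u0 law_bound] := law_tailL_gt.
pose s := 2 / eps; have s_gt0 : 0 < s by rewrite divr_gt0.
pose M := 4 * (s + 1) / eps; have M_gt0 : 0 < M by rewrite divr_gt0 //; lra.
exists M, u0 => x le_u0x; have sx_gt0 := survival_gt0 x.
have [K /andP[K_big K_small]] := nat_mul_survival_between x (ltW s_gt0).
have {}K_small : K%:R * survival x <= s + 1 by have := survival_le1 x; lra.
have mY : measurable_fun setT (fun t => L (sigma (first_exceed sigma x t) t) / L x - 1).
  exact: measurable_realfun.measurable_funB
    (measurable_realfun.measurable_funM (measurable_fun_tailL_first_exceed x) (measurable_cst _))
    (measurable_cst _).
apply: le_trans (P_first_exceed_in (C := [set y | (1 + M) * L x < L y]) K _ _ _) _.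
- exact: measurable_tailL_preimage (measurable_gtr _).
- exact: measurable_gtr_fun.
- by move=> t /= big _; rewrite -ltr_pdivlMr ?tailL_gt0 //; lra.
have law_small := law_bound x (1 + M) le_u0x ltac:(lra).
have : (1 + K%:R * survival x)^-1 <= eps / 2 by rewrite inv1D_le ?divr_gt0 // invf_div ltW.
have : K%:R * law [set y | (1 + M) * L x < L y] <= eps / 2.
  apply: le_trans (ler_wpM2l (ler0n _ K) law_small) _.
  rewrite mulrA ler_pdivrMr; last lra.
  have : eps / 2 * M = 2 * (s + 1) by rewrite /M; field; rewrite gt_eqF.
  nra.
rewrite lee_fin; lra.
Qed.

Lemma bdd_below_tailL_first_exceed :
  bdd_below_in_prob P (fun x t => L (sigma (first_exceed sigma x t) t) / L x - 1).
Proof.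
apply: bdd_below_in_prob_le1 => eps eps_gt0 eps_le1.
pose s := 2 / eps; have s_gt0 : 0 < s by rewrite divr_gt0.
pose g := eps / (4 * (s + 1)); have g_gt0 : 0 < g by rewrite divr_gt0 //; lra.
have g_s : g * (s + 1) = eps / 4 by rewrite /g; field; lra.
have g_lt1 : g < 1.
  rewrite /g ltr_pdivrMr; last lra.
  have : 0 < s * eps by rewrite mulr_gt0.
  lra.
have [u0 law_bound] := law_tailL_near_above (g := g) ltac:(by rewrite g_gt0 g_lt1).
exists g^-1; split; first by rewrite invr_gt0.
exists u0 => x le_u0x; have sx_gt0 := survival_gt0 x.
have [K /andP[K_big K_small]] := nat_mul_survival_between x (ltW s_gt0).
have {}K_small : K%:R * survival x <= s + 1 by have := survival_le1 x; lra.
have mY : measurable_fun setT (fun t => L (sigma (first_exceed sigma x t) t) / L x - 1).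
  exact: measurable_realfun.measurable_funB
    (measurable_realfun.measurable_funM (measurable_fun_tailL_first_exceed x) (measurable_cst _))
    (measurable_cst _).
apply: le_trans (P_first_exceed_in
  (C := [set y | x < y /\ L y < (1 + g) * L x]) K _ _ _) _.
- exact: measurableI (measurable_gtr x) (measurable_tailL_preimage (measurable_ltr _)).
- exact: measurable_ltr_fun.
- move=> t /=; rewrite invrK => small never; split; first exact: first_exceed_gt.
  by rewrite -ltr_pdivrMr ?tailL_gt0 //; lra.
have law_small := law_bound x le_u0x.
have : (1 + K%:R * survival x)^-1 <= eps / 2 by rewrite inv1D_le ?divr_gt0 // invf_div ltW.
have : K%:R * law [set y | x < y /\ L y < (1 + g) * L x] <= eps / 2.
  apply: le_trans (ler_wpM2l (ler0n _ K) law_small) _; nra.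
rewrite lee_fin; lra.
Qed.

Lemma bdd_above_tailL_argmax_before :
  bdd_above_in_prob P (fun x t => L (sigma (argmax_before sigma x t) t) / L x).
Proof.
move=> eps eps_gt0; have [y0 small] := survival_small eps_gt0.
exists 1, y0 => x le_y0x.
have cover : [set t | 1 < L (sigma (argmax_before sigma x t) t) / L x] `<=`
    sigma 0%N @^-1` [set z | x < z].
  move=> t /=; rewrite ltr_pdivlMr ?tailL_gt0 // mul1r => /tailL_ltW lt_x.
  have [/argmax_before0 arg0|pos] := posnP (first_exceed sigma x t); first by rewrite -arg0.
  by move: lt_x; rewrite ltNge argmax_before_le.
apply: le_trans (le_measure _ _ _ cover) _; rewrite ?inE.
- apply: measurable_gtr_fun.
  exact: measurable_realfun.measurable_funM (measurable_fun_tailL_argmax_before x)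
    (measurable_cst _).
- exact: measurable_sigma_preimage (measurable_gtr x).
apply: le_trans (_ : _ <= (survival x)%:E)%E _; last by rewrite lee_fin small.
by rewrite -(P_sigma_preimage 0 (measurable_gtr x)).
Qed.

Lemma bdd_below_tailL_argmax_before :
  bdd_below_in_prob P (fun x t => L (sigma (argmax_before sigma x t) t) / L x).
Proof.
move=> eps eps_gt0; pose s := eps / 2; have s_gt0 : 0 < s by rewrite divr_gt0.
pose M := 16 / (eps * eps); have M_gt0 : 0 < M by rewrite divr_gt0 // mulr_gt0.
have M_s : M * s = 8 / eps by rewrite /M /s; field; rewrite gt_eqF.
have [x1 law_bound] := law_tailL_ge M_gt0.
have s2_gt0 : 0 < s / 2 by rewrite divr_gt0.
have [x2 small] := survival_small s2_gt0.
exists M; split => //; exists (Num.max x1 x2) => x; rewrite ge_max => /andP[le_x1 le_x2].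
have [sx_gt0 sx_small] := (survival_gt0 x, small x le_x2).
have [K /andP[K_big K_small]] := nat_mul_survival_between x (ltW s2_gt0).
have {}K_small : K%:R * survival x <= s by lra.
pose A := [set y | M * L y < L x].
have mA : measurable A.
  apply: measurable_ltr_fun.
  exact: measurable_realfun.measurable_funM (measurable_cst M) measurable_tailL.
have compl_A : ~` A = [set y | L x <= M * L y].
  by apply/seteqP; split => y /=; rewrite leNgt => /negP.
have law_A : law A = 1 - law [set y | L x <= M * L y] by rewrite -compl_A lawC //; ring.
have cover : [set t | L (sigma (argmax_before sigma x t) t) / L x < M^-1] `<=`
    (some_in K [set z | x < z] `|` all_in K A) `|` never_exceeds sigma x.
  move=> t /= small_t; have [never|never] := pselect (never_exceeds sigma x t); [by right|left].
  have [lt_K|le_K] := ltnP (first_exceed sigma x t) K.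
    by left; exists (first_exceed sigma x t) => //; exact: first_exceed_gt.
  right => i lt_iK; have lt_i := leq_trans lt_iK le_K.
  have [_ arg_max] := argmax_beforeP (leq_ltn_trans (leq0n i) lt_i).
  rewrite ltr_pdivrMr ?tailL_gt0 // ltr_pdivlMl // in small_t.
  by apply: le_lt_trans small_t; rewrite /= ler_pM2l //; apply/le_tailL/arg_max.
apply: le_trans (P_le_cover _ _ _ cover) _.
- apply: measurable_ltr_fun.
  exact: measurable_realfun.measurable_funM (measurable_fun_tailL_argmax_before x)
    (measurable_cst _).
- exact: measurable_some_in (measurable_gtr x).
- exact: measurable_all_in _ mA.
have mD : measurable [set y | L x <= M * L y] by rewrite -compl_A; exact: measurableC.
have law_D := law_bound x le_x1; rewrite P_all_in // law_A.
set lD := law [set y | L x <= M * L y] in law_D *.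
have KlD : (eps / 2)^-1 <= K%:R * lD.
  have : K%:R * (M * survival x) <= K%:R * (2 * lD) by apply: ler_wpM2l.
  have : M * (s / 2) <= M * (K%:R * survival x) by rewrite ler_pM2l // ltW.
  have : M * (s / 2) = 4 / eps by rewrite mulrA M_s; field; rewrite gt_eqF.
  rewrite invf_div; lra.
have onem : (1 - lD) ^+ K <= eps / 2.
  apply: le_trans (expr_onem_le_inv _ _) (inv1D_le _ KlD); last by rewrite divr_gt0.
  by rewrite law_ge0 law_le1.
apply: le_trans (leeD (P_some_in_le K (measurable_gtr x)) (lexx _)) _.
by rewrite -/(survival x) -EFinD lee_fin; rewrite /s in K_small; lra.
Qed.

Lemma bdd_above_onem_tailL_argmax_before :
  bdd_above_in_prob P (fun x t => 1 - L (sigma (argmax_before sigma x t) t) / L x).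
Proof.
move=> eps eps_gt0; exists 1, 0 => x _.
rewrite (_ : [set t | _] = set0) ?measure0 ?lee_fin ?ltW //.
apply/seteqP; split => t //= big.
have : 0 < L (sigma (argmax_before sigma x t) t) / L x by rewrite divr_gt0 ?tailL_gt0.
lra.
Qed.

Lemma bdd_below_onem_tailL_argmax_before :
  bdd_below_in_prob P (fun x t => 1 - L (sigma (argmax_before sigma x t) t) / L x).
Proof.
apply: bdd_below_in_prob_le1 => eps eps_gt0 eps_le1.
pose s := 3 / eps; have s_gt0 : 0 < s by rewrite divr_gt0.
pose g := eps / (12 * (s + 1)); have g_gt0 : 0 < g by rewrite divr_gt0 //; lra.
have g_s : g * (s + 1) = eps / 12 by rewrite /g; field; lra.
have g_small : g <= 1 / 4.
  rewrite /g ler_pdivrMr; last lra.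
  have : 0 < s * eps by rewrite mulr_gt0.
  lra.
have [x1 law_bound] := law_tailL_near_below (g := g) ltac:(by rewrite g_gt0 g_small).
have [x2 small] := survival_small (e := eps / 3) ltac:(by rewrite divr_gt0).
exists g^-1; split; first by rewrite invr_gt0.
exists (Num.max x1 x2) => x; rewrite ge_max => /andP[le_x1 le_x2].
have [sx_gt0 sx_small] := (survival_gt0 x, small x le_x2).
have [K /andP[K_big K_small]] := nat_mul_survival_between x (ltW s_gt0).
have {}K_small : K%:R * survival x <= s + 1 by have := survival_le1 x; lra.
pose C := [set y | y <= x /\ (1 - g) * L x < L y].
have mC : measurable C.
  exact: measurableI (measurable_ler x) (measurable_tailL_preimage (measurable_gtr _)).
have cover : [set t | 1 - L (sigma (argmax_before sigma x t) t) / L x < g^-1^-1] `<=`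
    ((sigma 0%N @^-1` [set z | x < z] `|` all_in K [set z | z <= x]) `|`
     some_in K C) `|` never_exceeds sigma x.
  move=> t /=; rewrite invrK => small_t.
  have big : (1 - g) * L x < L (sigma (argmax_before sigma x t) t).
    by rewrite -ltr_pdivlMr ?tailL_gt0 //; lra.
  have [never|never] := pselect (never_exceeds sigma x t); [by right|left].
  have [i_x0|pos] := posnP (first_exceed sigma x t).
    by left; left; move: (first_exceed_gt never); rewrite i_x0.
  have [le_K|lt_K] := leqP K (first_exceed sigma x t).
    by left; right => i lt_iK; apply: first_exceed_lt; apply: leq_trans le_K.
  have [lt_arg _] := argmax_beforeP pos.
  right; exists (argmax_before sigma x t); first exact: ltn_trans lt_K.
  by split; first exact: argmax_before_le.
have mE0 : measurable (sigma 0%N @^-1` [set z | x < z]).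
  exact: measurable_sigma_preimage (measurable_gtr x).
have mAll : measurable (all_in K [set z | z <= x]) := measurable_all_in _ (measurable_ler x).
apply: le_trans (P_le_cover _ _ _ cover) _.
- apply: measurable_ltr_fun.
  exact: measurable_realfun.measurable_funB (measurable_cst _)
    (measurable_realfun.measurable_funM (measurable_fun_tailL_argmax_before x) (measurable_cst _)).
- exact: measurableU.
- exact: measurable_some_in mC.
have P_tail : (P (sigma 0%N @^-1` [set z | (x < z)%R]) <= (survival x)%:E)%E.
  by rewrite -(P_sigma_preimage 0 (measurable_gtr x)).
have P_union : (P (sigma 0%N @^-1` [set z | (x < z)%R] `|`
    all_in K [set z | (z <= x)%R]) <=
    (survival x + (1 + K%:R * survival x)^-1)%:E)%E.
  by rewrite EFinD; apply: le_trans (leeD P_tail (P_all_ler x K)); apply: measureU2.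
apply: le_trans (leeD P_union (P_some_in_le K mC)) _.
have law_C : K%:R * law C <= eps / 3.
  apply: le_trans (ler_wpM2l (ler0n _ K) (law_bound x le_x1)) _.
  have : 4 * g * (K%:R * survival x) <= 4 * g * (s + 1) by apply: ler_wpM2l; lra.
  lra.
have : (1 + K%:R * survival x)^-1 <= eps / 3.
  by rewrite inv1D_le ?divr_gt0 // invf_div ltW.
by rewrite -EFinD lee_fin; lra.
Qed.

End IidFirstExceedance.

Theorem lemma3p2 (d : measure_display) (T : measurableType d) (R : realType)
  (P : probability T R) (sigma : nat -> T -> R) :
  iid_seq P sigma ->
  P [set t | 0 < sigma 0%N t] = 1%E ->
  (forall u : R, (0 < P [set t | (u < sigma 0%N t)%R])%E) ->
  slowly_varying (tailL P (sigma 0%N)) ->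
  let L := tailL P (sigma 0%N) in
  bdd_in_prob P (fun x t => (first_exceed sigma x t)%:R / L x) /\
  bdd_in_prob P (fun x t => L (sigma (first_exceed sigma x t) t) / L x - 1) /\
  bdd_in_prob P (fun x t => L (sigma (argmax_before sigma x t) t) / L x) /\
  bdd_in_prob P (fun x t => 1 - L (sigma (argmax_before sigma x t) t) / L x).
Proof.
move=> iid _ survival_pos slow L.
split; [split|split; [split|split; [split|split]]].
- exact: bdd_above_first_exceed.
- exact: bdd_below_first_exceed.
- exact: bdd_above_tailL_first_exceed.
- exact: bdd_below_tailL_first_exceed.
- exact: bdd_above_tailL_argmax_before.
- exact: bdd_below_tailL_argmax_before.
- exact: bdd_above_onem_tailL_argmax_before.
- exact: bdd_below_onem_tailL_argmax_before.
Qed.
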